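(* Let $n,d\in\mathbb{N}_*$, let $p$ be a prime number with $p>d^n$, and let $K$ be a commutative domain of characteristic $p$. Then $\mathrm{CJC}(n,p,d,K)$ holds if and only if $\mathrm{NJC}(n,p,d,K)$ holds.
   Context: $\mathbb{N}_*=\mathbb{N}\setminus\{0\}$; for a domain $R$, $R_*^{-1}R$ is its fraction field, with $R_*=R\setminus\{0\}$; $K^*$ is the unit group of $K$; $p\mathbb{N}=\{pk:k\in\mathbb{N}\}$. For $n,d\in\mathbb{N}_*$, $p$ equal to $0$ or a prime, and $K$ a commutative domain of characteristic $p$, the statement $\mathrm{CJC}(n,p,d,K)$ is: for every pair of polynomial $K$-algebras $A$, $B$ in $n$ indeterminates and every injective $K$-algebra homomorphism $\phi:A\to B$ such that $\deg\phi(X)\le d$ for each indeterminate $X$ of $A$, letting $J(\phi)$ be the Jacobian matrix of $(\phi(X_1),\dots,\phi(X_n))$ (where $X_1,\dots,X_n$ are the indeterminates of $A$) with respect to the indeterminates of $B$, the following are equivalent: (1) $\phi$ is an isomorphism; (2) $\det J(\phi)\in K^*$ and $[B_*^{-1}B:\phi(A_* )^{-1}\phi(A)]\notin p\mathbb{N}$. The statement $\mathrm{NJC}(n,p,d,K)$ is the same statement with the condition $[B_*^{-1}B:\phi(A_* )^{-1}\phi(A)]\notin p\mathbb{N}$ deleted from (2), i.e. $\phi$ is an isomorphism if and only if $\det J(\phi)\in K^*$. *)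

From HB Require Import structures.
From mathcomp Require Import all_boot all_order all_algebra.
From mathcomp Require Import fraction mpoly.
Set Implicit Arguments. Unset Strict Implicit. Unset Printing Implicit Defensive.
Import GRing.Theory.
Local Open Scope ring_scope.
Notation tofrac := (@FracField.tofrac _).

(* The polynomial K-algebra in n indeterminates is modelled by {mpoly K[n]}
   (indeterminates 'X_i, i : 'I_n).  Both A and B are taken to be this algebra
   (any polynomial K-algebra in n indeterminates is isomorphic to it, via an
   isomorphism sending indeterminates to indeterminates). *)

Definition jacobian (K : idomainType) (n : nat)
  (phi : {lrmorphism {mpoly K[n]} -> {mpoly K[n]}}) : 'M[{mpoly K[n]}]_n :=
  \matrix_(i < n, j < n) (phi 'X_i)^`M(j).

Definition det_in_units (K : idomainType) (n : nat)
  (phi : {lrmorphism {mpoly K[n]} -> {mpoly K[n]}}) : Prop :=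
  exists c : K, c \is a GRing.unit /\ \det (jacobian phi) = @mpolyC n K c.

Definition in_frac_image (K : idomainType) (n : nat)
  (phi : {lrmorphism {mpoly K[n]} -> {mpoly K[n]}})
  (x : {fraction {mpoly K[n]}}) : Prop :=
  exists a b : {mpoly K[n]}, b != 0 /\ x = tofrac (phi a) / tofrac (phi b).

Definition frac_degree_is (K : idomainType) (n : nat)
  (phi : {lrmorphism {mpoly K[n]} -> {mpoly K[n]}}) (m : nat) : Prop :=
  exists s : m.-tuple {fraction {mpoly K[n]}},
    (forall c : 'I_m -> {fraction {mpoly K[n]}},
        (forall i, in_frac_image phi (c i)) ->
        \sum_(i < m) c i * tnth s i = 0 -> forall i, c i = 0) /\
    (forall x : {fraction {mpoly K[n]}},
        exists c : 'I_m -> {fraction {mpoly K[n]}},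
          (forall i, in_frac_image phi (c i)) /\
          x = \sum_(i < m) c i * tnth s i).

(* [B_star^{-1}B : phi(A_star)^{-1}phi(A)] \notin pN  (an infinite degree is not
   in pN). *)
Definition frac_degree_notin_pN (K : idomainType) (n : nat)
  (phi : {lrmorphism {mpoly K[n]} -> {mpoly K[n]}}) (p : nat) : Prop :=
  forall m : nat, frac_degree_is phi m -> ~ (p %| m)%N.

(* deg phi(X) <= d for every indeterminate X of A (msize = total degree + 1,
   and msize 0 = 0). *)
Definition deg_bounded (K : idomainType) (n : nat)
  (phi : {lrmorphism {mpoly K[n]} -> {mpoly K[n]}}) (d : nat) : Prop :=
  forall i : 'I_n, (msize (phi 'X_i) <= d.+1)%N.

Definition CJC (n p d : nat) (K : idomainType) : Prop :=
  forall phi : {lrmorphism {mpoly K[n]} -> {mpoly K[n]}},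
    injective phi -> deg_bounded phi d ->
    (bijective phi <-> det_in_units phi /\ frac_degree_notin_pN phi p).

Definition NJC (n p d : nat) (K : idomainType) : Prop :=
  forall phi : {lrmorphism {mpoly K[n]} -> {mpoly K[n]}},
    injective phi -> deg_bounded phi d ->
    (bijective phi <-> det_in_units phi).

From HB Require Import structures.
From mathcomp Require Import all_boot all_order all_algebra.
From mathcomp Require Import fraction mpoly generic_quotient.
From mathcomp Require Import zify.
Set Implicit Arguments. Unset Strict Implicit. Unset Printing Implicit Defensive.
Import GRing.Theory.

(* Only the degree condition separates CJC from NJC, and it holds automatically:
   the degree m of Frac(B) over Frac(phi A) satisfies 0 < m <= d ^ n < p.
   For the bound, clear denominators in a basis to get g_1, ..., g_m in B that are
   linearly independent over phi(A).  Then the products phi(X^al) g_i with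
   |al| <= t are linearly independent over K, as phi is injective, and have degree
   at most d t + e.  Counting monomials gives m C(n + t, n) <= C(n + d t + e, n)
   for every t, and comparing leading terms in t gives m <= d ^ n. *)

Lemma leq_expn2r a b e : a <= b -> a ^ e <= b ^ e.
Proof. by case: e => // e; rewrite leq_exp2r. Qed.

Lemma expn_leq_ffact n t : t.+1 ^ n <= (n + t) ^_ n.
Proof. by elim: n => // n IH; rewrite addSn ffactSS expnS leq_mul // ltnS leq_addl. Qed.

Lemma ffact_leq_expn n x : x ^_ n <= x ^ n.
Proof.
elim: n x => // n IH x; rewrite ffactnS expnS leq_mul //.
exact: leq_trans (IH _) (leq_expn2r _ (leq_pred x)).
Qed.

Lemma expnD_leq x c n : (x + c) ^ n.+1 <= x ^ n.+1 + n.+1 * c * (x + c) ^ n.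
Proof.
elim: n => [|n IH]; first by rewrite !expn1 mul1n muln1.
have le_pow : x ^ n.+1 <= (x + c) ^ n.+1 by rewrite leq_expn2r // leq_addr.
rewrite [(x + c) ^ n.+2]expnS [x ^ n.+2]expnS.
apply: leq_trans (leq_mul (leqnn (x + c)) IH) _.
move: le_pow; rewrite [(x + c) ^ n.+1]expnS.
set A := x ^ n.+1; set C := (x + c) ^ n; nia.
Qed.

Lemma leq_expn_of_bin_dominated n d e m : 0 < n ->
  (forall t, m * 'C(n + t, n) <= 'C(n + (d * t + e), n)) -> m <= d ^ n.
Proof.
case: n => // n _ dominated; rewrite leqNgt; apply/negP => lt_dn_m.
(* [c] absorbs the shift by [n + e]; [t] makes the error term of [expnD_leq]
   smaller than [t.+1 ^ n.+1]. *)
set c := n.+1 + e; set t := n.+1 * c * (d + c) ^ n.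
have upper : m * t.+1 ^ n.+1 <= (d * t.+1 + c) ^ n.+1.
  have := dominated t.
  rewrite -(leq_pmul2r (fact_gt0 n.+1)) -mulnA !bin_ffact => le_ffact.
  apply: leq_trans (leq_mul (leqnn m) (expn_leq_ffact _ _)) _.
  apply: leq_trans le_ffact (leq_trans (ffact_leq_expn _ _) _).
  by apply: leq_expn2r; rewrite /c; lia.
have lower : (d * t.+1) ^ n.+1 + t.+1 ^ n.+1 <= m * t.+1 ^ n.+1.
  by rewrite expnMn addnC -mulSn leq_mul2r lt_dn_m orbT.
have tail : (d * t.+1 + c) ^ n <= (d + c) ^ n * t.+1 ^ n.
  by rewrite -expnMn leq_expn2r // mulnDl leq_add2l leq_pmulr.
have := leq_trans lower (leq_trans upper (expnD_leq _ _ _)).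
rewrite leq_add2l => /leq_trans/(_ (leq_mul (leqnn _) tail)).
by rewrite mulnA -/t expnS leq_mul2r expn_eq0 /= ltnn.
Qed.

Lemma card_bmultinom n k : #|{: 'X_{1..n < k.+1}}| = 'C(n + k, n).
Proof.
rewrite -card_partial_ord_partitions.
have le_k (a : 'X_{1..n < k.+1}) i : a i <= k.
  rewrite -ltnS; apply: leq_trans _ (bmdeg a).
  by rewrite ltnS mdegE (bigD1 i) //= leq_addr.
pose f (a : 'X_{1..n < k.+1}) : n.-tuple 'I_k.+1 := [tuple inord (a i) | i < n].
have f_inj : injective f.
  move=> a b /(congr1 (fun t i => val (tnth t i))) /= fab.
  apply/val_inj/mnmP => i; have := congr1 (@^~ i) fab.
  by rewrite /= !tnth_mktuple !inordK ?ltnS ?le_k.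
rewrite -(card_imset _ f_inj); apply: eq_card => t; rewrite inE.
apply/imsetP/idP => [[a _ ->]|t_small].
  rewrite big_tuple (eq_bigr (fun i => a i)) => [|i _].
    by rewrite -mdegE -ltnS bmdeg.
  by rewrite tnth_mktuple inordK ?ltnS ?le_k.
have small : mdeg [multinom [tuple val (tnth t i) | i < n]] < k.+1.
  rewrite ltnS mdegE (eq_bigr (fun i => val (tnth t i))) => [|i _].
    by move: t_small; rewrite big_tuple.
  by rewrite mnmE.
exists (BMultinom small) => //; apply: eq_from_tnth => i.
by apply: val_inj; rewrite tnth_mktuple /= mnmE inordK.
Qed.

Local Open Scope ring_scope.
Local Open Scope quotient_scope.

Lemma fraction_numden (R : idomainType) (x : {fraction R}) :
  exists a b : R, b != 0 /\ x = tofrac a / tofrac b.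
Proof.
elim/quotW: x => r.
have d_neq0 := denom_ratioP r.
exists \n_r, \d_r; split => //.
apply: (@mulIf _ (tofrac \d_r)); first by rewrite tofrac_eq0.
rewrite mulfVK ?tofrac_eq0 //.
have -> : tofrac \d_r = \pi_{fraction R} (Ratio \d_r 1) by rewrite piE.
rewrite -[LHS]/(FracField.mul _ _) -FracField.pi_mul piE.
apply/eqmodP; rewrite /= FracField.equivfE /FracField.mulf.
by rewrite !numden_Ratio ?mulf_neq0 ?oner_eq0 // !mulr1 mulrC.
Qed.

Lemma common_denominator (R : idomainType) (I : finType) (x : I -> {fraction R}) :
  exists2 h : R, h != 0 & exists g : I -> R, forall i, tofrac (g i) = tofrac h * x i.
Proof.
have /fin_all_exists [f fP] : forall i, exists ab : R * R,
    ab.2 != 0 /\ x i = tofrac ab.1 / tofrac ab.2.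
  by move=> i; have [a [b [b_neq0 ->]]] := fraction_numden (x i); exists (a, b).
exists (\prod_i (f i).2).
  by rewrite prodf_seq_neq0; apply/allP => i _; case: (fP i).
exists (fun i => (f i).1 * \prod_(j | j != i) (f j).2) => i.
have [fi2_neq0 ->] := fP i.
rewrite [in RHS](bigD1 i) //= !tofracM.
by rewrite [RHS]mulrC mulrA divfK ?tofrac_eq0.
Qed.

Lemma free_rows_card_leq (R : idomainType) (I J : finType) (A : I -> J -> R) :
  (forall v : I -> R, (forall j, \sum_i v i * A i j = 0) -> forall i, v i = 0) ->
  (#|I| <= #|J|)%N.
Proof.
move=> A_free.
pose M : 'M[{fraction R}]_(#|I|, #|J|) :=
  \matrix_(r, c) tofrac (A (enum_val r) (enum_val c)).
suff /eqP <- : row_free M by exact: rank_leq_col.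
apply: inj_row_free => w wM0; apply/rowP => r.
have [h h_neq0 [g gP]] := common_denominator (fun x : I => w 0 (enum_rank x)).
have g0 : forall x, g x = 0.
  apply: A_free => j; apply/eqP; rewrite -tofrac_eq0 rmorph_sum /=; apply/eqP.
  transitivity (tofrac h * (w *m M) 0 (enum_rank j)); last by rewrite wM0 mxE mulr0.
  rewrite mxE mulr_sumr (reindex (@enum_rank I)) /=; last first.
    by exists enum_val => x _; rewrite ?enum_rankK ?enum_valK.
  by apply: eq_bigr => x _; rewrite tofracM gP !mxE !enum_rankK mulrA.
have /esym/eqP := gP (enum_val r); rewrite g0 tofrac0 enum_valK mxE.
by rewrite mulf_eq0 tofrac_eq0 (negbTE h_neq0) => /eqP.
Qed.

Section MsizeBounds.
Variables (K : idomainType) (n : nat).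
Implicit Types p q : {mpoly K[n]}.

Lemma msizeM_leq p q a b :
  (msize p <= a.+1)%N -> (msize q <= b.+1)%N -> (msize (p * q) <= (a + b).+1)%N.
Proof.
have [->|p_neq0] := eqVneq p 0; first by rewrite mul0r msize0.
have [->|q_neq0] := eqVneq q 0; first by rewrite mulr0 msize0.
have := msize_poly_eq0 p; have := msize_poly_eq0 q.
rewrite msizeM // (negbTE p_neq0) (negbTE q_neq0); lia.
Qed.

Lemma msizeXn_leq p a j : (msize p <= a.+1)%N -> (msize (p ^+ j) <= (a * j).+1)%N.
Proof.
move=> le_p; elim: j => [|j IH]; first by rewrite expr0 msize1 muln0.
by rewrite exprS mulnS msizeM_leq.
Qed.

Lemma msize_prod_leq (I : finType) (F : I -> {mpoly K[n]}) (k : I -> nat) :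
  (forall i, msize (F i) <= (k i).+1)%N -> (msize (\prod_i F i) <= (\sum_i k i).+1)%N.
Proof.
move=> le_F; apply: (big_rec2 (fun a p => msize p <= a.+1)%N); first by rewrite msize1.
by move=> i a p _; apply: msizeM_leq.
Qed.

Lemma msize_sum_leq (I : finType) (F : I -> {mpoly K[n]}) b :
  (forall i, msize (F i) <= b)%N -> (msize (\sum_i F i) <= b)%N.
Proof.
move=> le_F; apply: (big_ind (fun p => msize p <= b)%N) => // [|p q le_p le_q].
  by rewrite msize0.
by apply: leq_trans (msizeD_le _ _) _; rewrite geq_max le_p le_q.
Qed.

End MsizeBounds.

Section DegreeBound.
Variables (K : idomainType) (n d : nat).
Variable phi : {lrmorphism {mpoly K[n]} -> {mpoly K[n]}}.
Hypothesis phi_deg : deg_bounded phi d.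

Lemma msize_phi_mpolyX (al : 'X_{1..n}) : (msize (phi 'X_[al]) <= (d * mdeg al).+1)%N.
Proof.
rewrite mpolyXE_id rmorph_prod mdegE big_distrr /=.
by apply: msize_prod_leq => i; rewrite rmorphXn msizeXn_leq ?phi_deg.
Qed.

Definition free_over_image m (g : 'I_m -> {mpoly K[n]}) :=
  forall a : 'I_m -> {mpoly K[n]}, \sum_i phi (a i) * g i = 0 -> forall i, a i = 0.

Lemma frac_degree_free_over_image m :
  injective phi -> frac_degree_is phi m ->
  exists g : 'I_m -> {mpoly K[n]}, free_over_image g.
Proof.
move=> phi_inj [s [s_free _]].
have [h h_neq0 [g gP]] := common_denominator (fun i : 'I_m => tnth s i).
exists g => a sum0 i; apply: phi_inj; rewrite raddf0.
apply/eqP; rewrite -tofrac_eq0; apply/eqP; move: i; apply: s_free => [i|].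
  by exists (a i), 1; rewrite oner_neq0 rmorph1 tofrac1 divr1.
have : tofrac (\sum_i phi (a i) * g i) = 0 by rewrite sum0 tofrac0.
rewrite rmorph_sum /=; under eq_bigr => i _ do rewrite tofracM gP mulrCA.
by rewrite -mulr_sumr => /eqP; rewrite mulf_eq0 tofrac_eq0 (negbTE h_neq0) => /eqP.
Qed.

Lemma free_over_image_bin_bound m (g : 'I_m -> {mpoly K[n]}) e t :
  free_over_image g -> (forall i, msize (g i) <= e.+1)%N ->
  (m * 'C(n + t, n) <= 'C(n + (d * t + e), n))%N.
Proof.
move=> g_free le_g.
rewrite -!card_bmultinom -[m in (m * _)%N]card_ord -card_prod.
apply: (@free_rows_card_leq K _ _ (fun (x : 'I_m * 'X_{1..n < t.+1})
    (u : 'X_{1..n < (d * t + e).+1}) => (phi 'X_[x.2] * g x.1)@_u)) => v v_orth.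
pose a i := \sum_(al : 'X_{1..n < t.+1}) v (i, al) *: ('X_[al] : {mpoly K[n]}).
have expand : \sum_i phi (a i) * g i = \sum_x v x *: (phi 'X_[x.2] * g x.1).
  rewrite [RHS](eq_bigr (fun x => v (x.1, x.2) *: (phi 'X_[x.2] * g x.1))); last by case.
  rewrite -(pair_bigA _ (fun i al => v (i, al) *: (phi 'X_[al] * g i))) /=.
  apply: eq_bigr => i _; rewrite linear_sum mulr_suml; apply: eq_bigr => al _.
  by rewrite linearZ scalerAl.
have sum0 : \sum_i phi (a i) * g i = 0.
  rewrite expand; apply/mpolyP => u; rewrite mcoeff0.
  have [u_small|u_large] := ltnP (mdeg u) (d * t + e).+1.
    rewrite -(v_orth (BMultinom u_small)) linear_sum /=.
    by apply: eq_bigr => x _; rewrite mcoeffZ.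
  apply/memN_msupp_eq0/msize_mdeg_ge/(leq_trans _ u_large)/msize_sum_leq => x.
  apply: leq_trans (msizeZ_le _ _) _; rewrite -addSn msizeM_leq //.
  apply: leq_trans (msize_phi_mpolyX _) _.
  by rewrite ltnS leq_mul2l -ltnS bmdeg orbT.
case=> i al; have := congr1 (mcoeff al) (g_free a sum0 i).
rewrite mcoeff0 linear_sum (bigD1 al) //= mcoeffZ mcoeffX eqxx mulr1.
rewrite big1 ?addr0 // => b b_neq_al.
by rewrite mcoeffZ mcoeffX -bmeqP (negbTE b_neq_al) mulr0.
Qed.

Lemma free_over_image_card_leq m (g : 'I_m -> {mpoly K[n]}) :
  (0 < n)%N -> free_over_image g -> (m <= d ^ n)%N.
Proof.
move=> n_gt0 g_free; pose e := (\max_(i < m) msize (g i))%N.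
apply: (@leq_expn_of_bin_dominated _ _ e _ n_gt0) => t.
apply: free_over_image_bin_bound g_free _ => i.
exact: leq_trans (leq_bigmax i) (leqnSn _).
Qed.

Lemma frac_degree_gt0 m : frac_degree_is phi m -> (0 < m)%N.
Proof. by case: m => // -[s [_ /(_ 1) [c [_]]]]; rewrite big_ord0 => /eqP; rewrite oner_eq0. Qed.

Lemma deg_bounded_frac_degree_notin_pN p :
  (0 < n)%N -> injective phi -> (d ^ n < p)%N -> frac_degree_notin_pN phi p.
Proof.
move=> n_gt0 phi_inj lt_dn_p m deg_m /(dvdn_leq (frac_degree_gt0 deg_m)).
have [g /(free_over_image_card_leq n_gt0) le_m_dn] :=
  frac_degree_free_over_image phi_inj deg_m.
by rewrite leqNgt (leq_ltn_trans le_m_dn lt_dn_p).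
Qed.

End DegreeBound.

Theorem mainTheorem3 (n d p : nat) (K : idomainType) :
  (0 < n)%N -> (0 < d)%N -> prime p -> (d ^ n < p)%N -> p \in [pchar K] ->
  (CJC n p d K <-> NJC n p d K).
Proof.
move=> n_gt0 _ _ lt_dn_p _.
have notin_pN (phi : {lrmorphism {mpoly K[n]} -> {mpoly K[n]}}) :
    injective phi -> deg_bounded phi d -> frac_degree_notin_pN phi p.
  by move=> phi_inj phi_deg; apply: deg_bounded_frac_degree_notin_pN.
split=> jc phi phi_inj phi_deg.
all: by move: (jc phi phi_inj phi_deg) (notin_pN phi phi_inj phi_deg); tauto.
Qed.
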